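(* Let $\mu$ be a shift-invariant Borel probability measure on $\Sigma^\mathbb{Z}$ and for $c,d\in\mathtt{CA}$ define $\delta^\mu_B(c,d)=\int_{\Sigma^\mathbb{Z}}d_B(c(x),d(x))\,d\mu(x)$. Then $\delta^\mu_B(c,d)=\delta^\mu(c,d)$ for all $c,d\in\mathtt{CA}$.
   Context: $\Sigma$ is a finite alphabet with $|\Sigma|\ge2$. A cellular automaton (CA) is a continuous map $\Sigma^\mathbb{Z}\to\Sigma^\mathbb{Z}$ commuting with the shift $\sigma(x)_i=x_{i+1}$; $\mathtt{CA}$ is the set of all CA. The Besicovitch distance is $d_B(x,y)=\limsup_{n\to\infty}\frac{|\{i:|i|\le n,\ x_i\ne y_i\}|}{2n+1}$. $\mu$ is shift-invariant if $\mu(\sigma(C))=\mu(C)$ for all Borel $C$. $\delta^\mu(c,d)=\mu(\{x\mid c(x)_0\ne d(x)_0\})$. *)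

From HB Require Import structures.
From mathcomp Require Import all_boot all_order all_algebra.
From mathcomp Require Import all_classical all_reals all_analysis.
Import Order.TTheory GRing.Theory Num.Theory.

Set Implicit Arguments.
Unset Strict Implicit.
Unset Printing Implicit Defensive.

Local Open Scope classical_set_scope.
Local Open Scope ring_scope.

(* A finite alphabet.  The point (an arbitrary element) is only needed so
   that MathComp-Analysis can build the measurable space; the alphabet is
   nonempty anyway since |Sigma| >= 2. *)
HB.structure Definition FinPointed := {T of Finite T & isPointed T}.

Definition Conf (S : FinPointed.type) : Type :=
  prod_topology (fun _ : int => discrete_topology S).

Definition BorelConf (S : FinPointed.type) :=
  g_sigma_algebraType (@open (Conf S)).

Definition sshift (S : FinPointed.type) (x : Conf S) : Conf S :=
  fun i => x (i + 1).

Definition is_CA (S : FinPointed.type) (F : Conf S -> Conf S) : Prop :=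
  continuous F /\ (forall x, F (sshift x) = sshift (F x)).

(* Besicovitch distance:
   d_B(x,y) = limsup_n |{ i : |i| <= n, x_i <> y_i }| / (2n+1).
   The indices i with |i| <= n are written k - n for k = 0, ..., 2n. *)
Definition dB (R : realType) (S : FinPointed.type) (x y : Conf S) : R :=
  limn_sup (fun n : nat =>
    (#|[set k : 'I_(2 * n + 1) | x (k%:Z - n%:Z) != y (k%:Z - n%:Z)]|%:R
      / (2 * n + 1)%:R)).

From HB Require Import structures.
From mathcomp Require Import all_boot all_order all_algebra.
From mathcomp Require Import all_classical all_reals all_analysis.
From mathcomp Require Import ring lra zify measurable_realfun.
Import Order.TTheory GRing.Theory Num.Theory.
Local Open Scope classical_set_scope.
Local Open Scope ring_scope.

Set Implicit Arguments.
Unset Strict Implicit.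
Unset Printing Implicit Defensive.

(* The Besicovitch distance d_B(c x, d x) is the upper density, over the windows
   [-n, n], of the visits of the shift orbit of x to D = {y | (c y)_0 <> (d y)_0};
   it is the limsup of the symmetric averages of 1_D along the orbit.  Fatou's lemma
   would bound its integral from below only, so we prove the upper half of
   Birkhoff's ergodic theorem directly: for a measure-preserving T, the integral of
   the limsup of the one-sided averages of 1_D is at most mu(D).  The proof is a
   covering argument: for most points the average comes within e of its limsup
   before a fixed time N, and cutting orbits into such blocks bounds L times that
   limsup by the number of visits to D among the first L points, up to errors that
   vanish after dividing by L.  Applied to sigma and sigma^-1 this bounds the
   integral of d_B by mu(D); applied to the complement of D it bounds the integral
   of the upper density of the complement by 1 - mu(D).  Since the two upper
   densities add up to at least 1, both bounds are equalities. *)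

Section limn_sup_bounded.
Variable R : realType.
Implicit Types (u v : R^o^nat) (a : R).

Lemma bounded_fun_01 u : (forall n, 0 <= u n <= 1) -> bounded_fun u.
Proof.
move=> u01; exists 1; split => // M M1 n _ /=.
have /andP[u0 u1] := u01 n.
by rewrite ger0_norm // (le_trans u1) // ltW.
Qed.

Lemma limn_sup_le_near u a : bounded_fun u ->
  (forall e, 0 < e -> \forall n \near \oo, u n <= a + e) -> limn_sup u <= a.
Proof.
move=> bu ua; apply/ler_addgt0Pr => e e0.
have [m _ hm] := ua e e0.
rewrite limn_supE //; apply: (@le_trans _ _ (sups u m)).
  by apply: ge_inf; [exact: bounded_fun_has_lbound_sups | exists m].
apply: ge_sup; first by exists (u m); exists m => /=.
by move=> _ [n /= mn <-]; exact: hm.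
Qed.

Lemma near_le_limn_sup u e : bounded_fun u -> 0 < e ->
  \forall n \near \oo, u n <= limn_sup u + e.
Proof.
move=> bu e0; have : inf (range (sups u)) < limn_sup u + e.
  by rewrite -limn_supE // ltrDl.
move=> /inf_lt [|_ [m _ <-] hm]; first by exists (sups u 0%N), 0%N.
exists m => // n /= mn; apply/ltW/(le_lt_trans _ hm).
apply: ub_le_sup; last by exists n.
exact/has_ubound_sdrop/bounded_fun_has_ubound.
Qed.

Lemma limn_sup_ge u a : bounded_fun u -> (forall n, a <= u n) -> a <= limn_sup u.
Proof.
move=> bu au; apply/ler_addgt0Pr => e e0.
have [m _ hm] := near_le_limn_sup bu e0.
exact: le_trans (au m) (hm m (leqnn m)).
Qed.

Lemma limn_sup_01 u : (forall n, 0 <= u n <= 1) -> 0 <= limn_sup u <= 1.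
Proof.
move=> u01; have bu := bounded_fun_01 u01.
rewrite limn_sup_ge //=; last by move=> n; have /andP[] := u01 n.
apply: limn_sup_le_near => // e e0; apply: nearW => n.
by have /andP[_ u1] := u01 n; rewrite (le_trans u1) // lerDl ltW.
Qed.

Lemma lt_limn_sup_exists u a : bounded_fun u -> a < limn_sup u ->
  exists n, a < u n.
Proof.
move=> bu; apply: contraPP => /forallNP ua; apply/negP; rewrite -leNgt.
apply: limn_sup_le_near => // e e0; apply: nearW => n.
by move/negP: (ua n); rewrite -leNgt => /le_trans->//; rewrite lerDl ltW.
Qed.

Lemma limn_sup_le_asymp u v : bounded_fun u -> bounded_fun v ->
  (forall n, u n <= v n + n.+1%:R^-1) -> limn_sup u <= limn_sup v.
Proof.
move=> bu bv uv; apply: limn_sup_le_near => // e e0.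
have e20 : 0 < e / 2 by rewrite divr_gt0.
near=> n; apply: (le_trans (uv n)); rewrite [e]splitr addrA lerD //.
  by near: n; exact: near_le_limn_sup.
by apply/ltW; near: n; exact: (near_infty_natSinv_lt (PosNum e20)).
Unshelve. all: by end_near.
Qed.

Lemma limn_supS u : bounded_fun u -> limn_sup (fun n => u n.+1) = limn_sup u.
Proof.
move=> bu; have bS : bounded_fun (fun n => u n.+1).
  by case: bu => M [M0 hM]; exists M; split => // x Mx n _; exact: hM.
apply/eqP; rewrite eq_le; apply/andP; split; apply: limn_sup_le_near => // e e0.
  have [m _ hm] := near_le_limn_sup bu e0.
  by exists m => // n /= mn; apply: hm; exact: leqW.
have [m _ hm] := near_le_limn_sup bS e0.
by exists m.+1 => // -[//|n] /= mn; exact: hm.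
Qed.

End limn_sup_bounded.

Lemma sum_indic_01 (R : realType) (X : Type) (D : set X) (f : nat -> X) n :
  0 <= \sum_(0 <= k < n) (\1_D (f k) : R) <= n%:R.
Proof.
rewrite sumr_ge0 //=.
have -> : n%:R = \sum_(0 <= k < n) 1 :> R by rewrite sumr_const_nat subn0.
exact: ler_sum.
Qed.

Lemma sum_iter_split (V : nmodType) (X : Type) (T : X -> X) (G : X -> V) x m L :
  (m <= L)%N -> \sum_(0 <= k < L) G (iter k T x) =
  \sum_(0 <= k < m) G (iter k T x) + \sum_(0 <= k < L - m) G (iter k T (iter m T x)).
Proof.
move=> mL; rewrite (@big_cat_nat _ _ _ m) //; congr (_ + _).
by rewrite -{1}(add0n m) big_addn; apply: eq_bigr => k _; rewrite iterD.
Qed.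

Section ergodic_averages.
Variables (R : realType) (X : Type) (T : X -> X) (D : set X).

Definition ergodic_avg (n : nat) (x : X) : R :=
  (\sum_(0 <= k < n.+1) \1_D (iter k T x)) / n.+1%:R.

Definition ergodic_limsup (x : X) : R := limn_sup (ergodic_avg ^~ x).

Lemma ergodic_avg_01 n x : 0 <= ergodic_avg n x <= 1.
Proof.
have /andP[s0 s1] := sum_indic_01 R D (fun k => iter k T x) n.+1.
by rewrite divr_ge0 //= ler_pdivrMr // mul1r.
Qed.

Lemma bounded_ergodic_avg x : bounded_fun (ergodic_avg ^~ x).
Proof. by apply: bounded_fun_01 => n; exact: ergodic_avg_01. Qed.

Lemma ergodic_limsup_01 x : 0 <= ergodic_limsup x <= 1.
Proof. by apply: limn_sup_01 => n; exact: ergodic_avg_01. Qed.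

Lemma ergodic_avgS n x :
  ergodic_avg n.+1 x = (\1_D x + ergodic_avg n (T x) * n.+1%:R) / n.+2%:R.
Proof.
rewrite /ergodic_avg big_nat_recl // divfK ?pnatr_eq0 //.
by congr ((_ + _) / _); apply: eq_bigr => k _; rewrite iterSr.
Qed.

Lemma dist_ergodic_avgS n x :
  `|ergodic_avg n.+1 x - ergodic_avg n (T x)| <= n.+1%:R^-1.
Proof.
rewrite ergodic_avgS; set a := \1_D x; set b := ergodic_avg n (T x).
have [a0 a1] : 0 <= a /\ a <= 1 by rewrite /a.
have /andP[b0 b1] : 0 <= b <= 1 := ergodic_avg_01 n (T x).
have -> : (a + b * n.+1%:R) / n.+2%:R - b = (a - b) / n.+2%:R.
  by field; rewrite -natrD pnatr_eq0.
rewrite normrM normfV normr_nat (@le_trans _ _ n.+2%:R^-1) //.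
  rewrite -[leRHS]mul1r ler_wpM2r ?invr_ge0 //.
  by rewrite ler_norml; apply/andP; split; lra.
by rewrite lef_pV2 ?posrE // ler_nat.
Qed.

Lemma ergodic_limsupT x : ergodic_limsup (T x) = ergodic_limsup x.
Proof.
have bT := bounded_ergodic_avg (T x).
have bS : bounded_fun (fun n => ergodic_avg n.+1 x).
  by apply: bounded_fun_01 => n; exact: ergodic_avg_01.
rewrite /ergodic_limsup -[RHS](limn_supS (bounded_ergodic_avg x)).
apply/eqP; rewrite eq_le !limn_sup_le_asymp // => n /=;
  by have := dist_ergodic_avgS n x; rewrite ler_distl lerBlDr => /andP[].
Qed.

Lemma ergodic_limsup_iter m x : ergodic_limsup (iter m T x) = ergodic_limsup x.
Proof. by elim: m => //= m IH; rewrite ergodic_limsupT. Qed.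

End ergodic_averages.

Lemma ergodic_limsup_covering (R : realType) (X : Type) (T : X -> X) (D E : set X)
    (e : R) (N : nat) : 0 <= e ->
  (forall x, ~ E x -> exists2 n, (n <= N)%N &
     ergodic_limsup R T D x - e < ergodic_avg R T D n x) ->
  forall L x, L%:R * ergodic_limsup R T D x <=
    \sum_(0 <= k < L) (\1_D \+ \1_E) (iter k T x) + N%:R + L%:R * e.
Proof.
(* Strong induction on L: a point of E costs one step, any other point starts a
   block of length at most N + 1 whose average is within e of the limsup, and a
   block cut off by the end of the orbit has length at most N. *)
move=> e0 stop_early; set F := \1_D \+ \1_E.
have F_ge0 y K : 0 <= \sum_(0 <= k < K) F (iter k T y).
  by apply: sumr_ge0 => k _; rewrite addr_ge0.
elim/ltn_ind => -[_ x|L IH x]; first by rewrite big_geq // !mul0r add0r addr0.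
have /andP[g0 g1] := ergodic_limsup_01 R T D x.
have [Ex|/stop_early[n nN avg_n]] := pselect (E x).
  rewrite (@sum_iter_split _ _ T F x 1 L.+1) // big_nat1 subn1 /=.
  have := IH L (ltnSn L) (T x); rewrite ergodic_limsupT.
  have : 0 <= \1_D x :> R by [].
  have E1 : \1_E x = 1 :> R by rewrite indicE mem_set.
  by rewrite /F /= E1 -natr1 => *; lra.
have {}avg_n : (ergodic_limsup R T D x - e) * n.+1%:R <
    \sum_(0 <= k < n.+1) \1_D (iter k T x) by rewrite -ltr_pdivlMr.
have [nL|Ln] := leqP n.+1 L.+1.
  have := IH (L - n)%N ltac:(lia) (iter n.+1 T x); rewrite ergodic_limsup_iter.
  have : \sum_(0 <= k < n.+1) \1_D (iter k T x) <= \sum_(0 <= k < n.+1) F (iter k T x).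
    by apply: ler_sum => k _; rewrite lerDl.
  move: avg_n; rewrite (@sum_iter_split _ _ T F x n.+1 L.+1) // subSS natrB //.
  by rewrite -!natr1 => *; lra.
have : L.+1%:R <= N%:R :> R by rewrite ler_nat; lia.
have : L.+1%:R * ergodic_limsup R T D x <= L.+1%:R by rewrite ler_piMr.
have := F_ge0 x L.+1; have : 0 <= L.+1%:R * e by rewrite mulr_ge0.
by move=> *; lra.
Qed.

Definition late_set (R : realType) (X : Type) (T : X -> X) (D : set X)
    (e : R) (N : nat) : set X :=
  [set x | forall n, (n <= N)%N -> ergodic_avg R T D n x <= ergodic_limsup R T D x - e].

Section late_sets.
Variables (R : realType) (X : Type) (T : X -> X) (D : set X) (e : R).

Lemma late_setN x N : ~ late_set T D e N x ->
  exists2 n, (n <= N)%N & ergodic_limsup R T D x - e < ergodic_avg R T D n x.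
Proof.
move=> /existsNP[n /not_implyP[nN /negP]]; rewrite -ltNge => lt_n.
by exists n.
Qed.

Lemma late_set_nonincreasing : nonincreasing_seq (late_set T D e).
Proof. by move=> N M NM; rewrite subsetEset => x lx n nM; exact/lx/(leq_trans nM). Qed.

Lemma bigcap_late_set : 0 < e -> \bigcap_N late_set T D e N = set0.
Proof.
move=> e0; apply/seteqP; split => // x lx.
have [|n lt_n] := lt_limn_sup_exists (bounded_ergodic_avg R T D x)
  (_ : ergodic_limsup R T D x - e < _); first by rewrite ltrBlDr ltrDl.
by have := lx n I n (leqnn n); rewrite leNgt lt_n.
Qed.

End late_sets.

Section probability_bounds.
Context (R : realType) (d : measure_display) (X : measurableType d).
Variable P : probability X R.
Local Open Scope ereal_scope.

Lemma integral_cst1 : \int[P]_x (cst 1 x) = 1.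
Proof. by rewrite integral_cst // [X in _ * X](probability_setT P) mule1. Qed.

Lemma fin_num_integral_01 (f : X -> R) : measurable_fun setT f ->
  (forall x, (0 <= f x <= 1)%R) -> \int[P]_x (f x)%:E \is a fin_num.
Proof.
move=> mf f01; have f0 x : 0 <= (f x)%:E by rewrite lee_fin; case/andP: (f01 x).
rewrite ge0_fin_numE; last exact: integral_ge0.
apply: (@le_lt_trans _ _ (\int[P]_x (cst 1 x))); last by rewrite integral_cst1 ltey.
apply: ge0_le_integral => //; first exact/measurable_EFinP.
by move=> x _; rewrite lee_fin; case/andP: (f01 x).
Qed.

Lemma integral_eq_measure_complement (f g : X -> R) (A : set X) : measurable A ->
  measurable_fun setT f -> measurable_fun setT g ->
  (forall x, (0 <= f x)%R) -> (forall x, (0 <= g x)%R) ->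
  (forall x, (1 <= f x + g x)%R) ->
  \int[P]_x (f x)%:E <= P A -> \int[P]_x (g x)%:E <= P (~` A) ->
  \int[P]_x (f x)%:E = P A.
Proof.
move=> mA mf mg f0 g0 fg1 fA gA; rewrite probability_setC // in gA.
have mfE : measurable_fun setT (EFin \o f) by exact/measurable_EFinP.
have mgE : measurable_fun setT (EFin \o g) by exact/measurable_EFinP.
have f0E x : 0 <= (f x)%:E by rewrite lee_fin.
have g0E x : 0 <= (g x)%:E by rewrite lee_fin.
have If0 : 0 <= \int[P]_x (f x)%:E by exact: integral_ge0.
have Ig0 : 0 <= \int[P]_x (g x)%:E by exact: integral_ge0.
have PA := fin_num_measure P _ mA.
have If : \int[P]_x (f x)%:E \is a fin_num.
  by rewrite ge0_fin_numE // (le_lt_trans fA) // ltey_eq PA.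
have Ig : \int[P]_x (g x)%:E \is a fin_num.
  by rewrite ge0_fin_numE // (le_lt_trans gA) // ltey_eq fin_numB PA.
have fg : 1 <= \int[P]_x (f x)%:E + \int[P]_x (g x)%:E.
  rewrite -ge0_integralD //; apply: (@le_trans _ _ (\int[P]_x (cst 1 x))).
    by rewrite integral_cst1.
  apply: ge0_le_integral => //; first exact: emeasurable_funD.
  by move=> x _; rewrite -EFinD lee_fin.
move: fA gA fg; rewrite -(fineK If) -(fineK Ig) -(fineK PA) -!EFinD !lee_fin => *.
by congr EFin; lra.
Qed.

End probability_bounds.

Section measure_preserving.
Context (R : realType) (d : measure_display) (X : measurableType d).
Variables (P : probability X R) (T : X -> X).
Hypothesis mT : measurable_fun setT T.
Hypothesis PT : forall A, measurable A -> P (T @^-1` A) = P A.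

Lemma measurable_iter k : measurable_fun setT (iter k T).
Proof.
elim: k => [|k IH]; first exact: measurable_id.
by rewrite (_ : iter k.+1 T = T \o iter k T) //; exact: measurableT_comp.
Qed.

Lemma measurable_preimage_iter k A : measurable A -> measurable (iter k T @^-1` A).
Proof. by move=> mA; rewrite -[_ @^-1` _]setTI; exact: measurable_iter. Qed.

Lemma measure_preimage_iter k A : measurable A -> P (iter k T @^-1` A) = P A.
Proof.
elim: k A => // k IH A mA.
by rewrite (_ : _ @^-1` _ = iter k T @^-1` (T @^-1` A)) // IH ?PT //;
  exact: (measurable_preimage_iter 1).
Qed.

Lemma integral_indic_iter k A : measurable A ->
  (\int[P]_x (\1_A (iter k T x) : R)%:E = P A)%E.
Proof.
move=> mA; rewrite -(measure_preimage_iter k mA) -[X in P X]setIT.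
by rewrite -integral_indic //; exact: measurable_preimage_iter.
Qed.

Lemma measurable_indic_iter k A : measurable A ->
  measurable_fun setT (fun x => (\1_A (iter k T x) : R)).
Proof.
by move=> mA; apply: measurableT_comp; [exact: measurable_indic | exact: measurable_iter].
Qed.

Lemma measurable_ergodic_avg D n : measurable D ->
  measurable_fun setT (ergodic_avg R T D n).
Proof.
move=> mD; apply: measurable_funM; last exact: measurable_cst.
by apply: measurable_sum => k; exact: measurable_indic_iter.
Qed.

Lemma measurable_ergodic_limsup D : measurable D ->
  measurable_fun setT (ergodic_limsup R T D).
Proof.
move=> mD; apply: measurable_fun_limn_sup => [x _|x _|n].
- exact/bounded_fun_has_ubound/bounded_ergodic_avg.
- exact/bounded_fun_has_lbound/bounded_ergodic_avg.
- exact: measurable_ergodic_avg.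
Qed.

Lemma measurable_late_set D (e : R) N : measurable D -> measurable (late_set T D e N).
Proof.
move=> mD; rewrite (_ : late_set _ _ _ _ = \bigcap_(n in [set n | (n <= N)%N])
    [set x | ergodic_avg R T D n x <= ergodic_limsup R T D x - e]); last first.
  by apply/seteqP; split => x /= lx n; [exact: lx | exact: lx].
apply: bigcap_measurableType => n _.
have true_measurable : measurable [set true] by [].
have := measurable_fun_ler (measurable_ergodic_avg n mD)
  (measurable_funB (measurable_ergodic_limsup mD) (measurable_cst e))
  measurableT true_measurable.
by rewrite setTI; congr measurable; apply/seteqP; split => x /= => [->|].
Qed.

End measure_preserving.

Section maximal_inequality.
Context (R : realType) (d : measure_display) (X : measurableType d).
Variables (P : probability X R) (T : X -> X).
Hypothesis mT : measurable_fun setT T.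
Hypothesis PT : forall A, measurable A -> P (T @^-1` A) = P A.
Variable D : set X.
Hypothesis mD : measurable D.

Lemma integral_visits E L c : measurable E -> 0 <= c ->
  (\int[P]_x (\sum_(0 <= k < L) (\1_D \+ \1_E) (iter k T x) + c)%:E =
   (L%:R * (fine (P D) + fine (P E)) + c)%:E)%E.
Proof.
move=> mE c0; have mF k : measurable_fun setT (fun x => ((\1_D \+ \1_E) (iter k T x))%:E).
  apply/measurable_EFinP; apply: measurable_funD; exact: measurable_indic_iter.
under eq_integral do rewrite EFinD -sumEFin.
rewrite ge0_integralD //; last 2 first.
- by move=> x _; apply: sume_ge0 => k _; rewrite lee_fin addr_ge0.
- exact: emeasurable_sum.
rewrite ge0_integral_sum //; last by move=> k x _; rewrite lee_fin addr_ge0.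
have Ik k : (\int[P]_x ((\1_D (iter k T x) : R)%:E + (\1_E (iter k T x))%:E) =
    (fine (P D) + fine (P E))%:E)%E.
  rewrite ge0_integralD ?integral_indic_iter ?EFinD ?fineK ?fin_num_measure //;
    by apply/measurable_EFinP; exact: measurable_indic_iter.
under eq_bigr do under eq_integral do rewrite EFinD.
rewrite (eq_bigr _ (fun k _ => Ik k)) sumEFin sumr_const_nat subn0 mulr_natl.
by rewrite integral_cst // [X in (_ * X)%E](probability_setT P) mule1.
Qed.

Lemma small_late_set (e : R) : 0 < e -> exists N, (P (late_set T D e N) < e%:E)%E.
Proof.
move=> e0; have mL N := measurable_late_set mT e N mD.
have := @nonincreasing_cvg_mu _ _ _ P (late_set T D e).
rewrite bigcap_late_set // measure0 => /(_ _ mL measurable0 (late_set_nonincreasing T D e)).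
move=> /(_ (le_lt_trans (probability_le1 P (mL 0%N)) (ltey _))).
move=> /(_ _ (open_ereal_lt' (_ : 0 < e%:E)%E))[|N _ PN]; first by rewrite lte_fin.
by exists N; apply: PN => /=.
Qed.

Lemma integral_ergodic_limsup_covering e N L : 0 <= e ->
  ((L%:R)%:E * \int[P]_x (ergodic_limsup R T D x)%:E <=
   (L%:R * (fine (P D) + fine (P (late_set T D e N))) + (N%:R + L%:R * e))%:E)%E.
Proof.
move=> e0; have mg := measurable_ergodic_limsup (R := R) mT mD.
have mE := measurable_late_set mT e N mD.
have g0 x : 0 <= ergodic_limsup R T D x by case/andP: (ergodic_limsup_01 R T D x).
rewrite -ge0_integralZl_EFin //; last 2 first.
- by move=> x _; rewrite lee_fin.
- exact/measurable_EFinP.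
rewrite -integral_visits ?addr_ge0 ?mulr_ge0 //.
apply: ge0_le_integral => //.
- by move=> x _; rewrite lee_fin mulr_ge0.
- by apply/measurable_EFinP; apply: measurable_funM => //; exact: measurable_cst.
- apply/measurable_EFinP; apply: measurable_funD; last exact: measurable_cst.
  by apply: measurable_sum => k; apply: measurable_funD; exact: measurable_indic_iter.
- move=> x _; rewrite -EFinM lee_fin addrA.
  by apply: ergodic_limsup_covering => // y; exact: late_setN.
Qed.

Lemma integral_ergodic_limsup_le :
  (\int[P]_x (ergodic_limsup R T D x)%:E <= P D)%E.
Proof.
have mg := measurable_ergodic_limsup (R := R) mT mD.
have Ifin := fin_num_integral_01 P mg (ergodic_limsup_01 R T D).
rewrite -(fineK Ifin) -[P D]fineK ?fin_num_measure // lee_fin.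
apply/ler_addgt0Pr => e3 e30; pose e := e3 / 3.
have e0 : 0 < e by rewrite divr_gt0.
have [N PN] := small_late_set e0.
have mE := measurable_late_set mT e N mD.
have q0 : 0 <= fine (P (late_set T D e N)) by rewrite fine_ge0.
have qe : fine (P (late_set T D e N)) < e.
  by rewrite -lte_fin fineK ?fin_num_measure.
pose L := Num.bound (N%:R / e).
have NL : N%:R < L%:R * e.
  by rewrite -ltr_pdivrMr //; apply: archi_boundP; rewrite divr_ge0 // ltW.
have L0 : 0 < L%:R :> R by rewrite -(pmulr_lgt0 _ e0) (le_lt_trans _ NL).
have := integral_ergodic_limsup_covering N L (ltW e0).
rewrite -[X in (_ * X)%E](fineK Ifin) -EFinM lee_fin.
have -> : e3 = e * 3 by rewrite /e divfK // pnatr_eq0.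
rewrite -(ler_pM2l L0) => *; nra.
Qed.

End maximal_inequality.

Lemma continuous_prod_topology (I : eqType) (K : I -> topologicalType)
    (W : topologicalType) (F : W -> prod_topology K) :
  (forall i, continuous (fun w => F w i)) -> continuous F.
Proof.
move=> cF w; apply/cvg_sup => i.
have proj_surj : (fun f : prod_topology K => f i) @` setT = setT.
  by rewrite eqEsubset; split => // y _; exists (dfwith (F w) i y); last exact: dfwithin.
apply/cvg_image => //; apply: cvg_trans (cF i w) => Q FQ.
by exists ((fun f : prod_topology K => f i) @^-1` Q); [exact: FQ | exact: image_preimage].
Qed.

Definition shiftz (S : FinPointed.type) (i : int) (x : Conf S) : Conf S :=
  fun j => x (j + i).

Section shifts.
Variable S : FinPointed.type.
Implicit Types (x : Conf S) (i j : int).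

Lemma shiftzD i j x : shiftz i (shiftz j x) = shiftz (i + j) x.
Proof. by apply: funext => k; rewrite /shiftz addrA. Qed.

Lemma shiftz0 x : shiftz 0 x = x.
Proof. by apply: funext => k; rewrite /shiftz addr0. Qed.

Lemma shiftzK i x : shiftz (- i) (shiftz i x) = x.
Proof. by rewrite shiftzD addNr shiftz0. Qed.

Lemma iter_shiftz i k x : iter k (shiftz i) x = shiftz (i * k%:Z) x.
Proof.
elim: k => [|k IH] /=; first by rewrite mulr0 shiftz0.
by rewrite IH shiftzD -addn1 PoszD mulrDr mulr1 addrC.
Qed.

Lemma shiftz_commute (f : Conf S -> Conf S) :
  (forall x, f (sshift x) = sshift (f x)) ->
  forall i x, f (shiftz i x) = shiftz i (f x).
Proof.
move=> f1; have fN1 x : f (shiftz (-1) x) = shiftz (-1) (f x).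
  rewrite -[in RHS](shiftzK (-1) x) opprK -[shiftz 1 _]/(sshift _) f1.
  by rewrite /sshift -/(shiftz 1 _) shiftzD addNr shiftz0.
have f_iter j k x : (forall y, f (shiftz j y) = shiftz j (f y)) ->
    f (shiftz (j * k%:Z) x) = shiftz (j * k%:Z) (f x).
  by move=> fj; rewrite -!iter_shiftz; elim: k => //= k IH; rewrite fj IH.
move=> [k|k] x; first by rewrite -[Posz k]mul1r; exact: f_iter.
by rewrite NegzE -mulN1r; exact: f_iter.
Qed.

Lemma continuous_shiftz i : continuous (@shiftz S i).
Proof.
apply: continuous_prod_topology => j.
exact: (@proj_continuous int (fun _ => discrete_topology S) (j + i)).
Qed.

Lemma measurable_open_Conf (A : set (Conf S)) : open A ->
  measurable (A : set (BorelConf S)).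
Proof. exact: sub_sigma_algebra. Qed.

Lemma measurable_shiftz i :
  measurable_fun setT (@shiftz S i : BorelConf S -> BorelConf S).
Proof.
apply: (@measurability _ _ (BorelConf S) (BorelConf S) setT _ (@open (Conf S))) => //.
move=> _ [B oB <-].
rewrite setTI; apply: measurable_open_Conf.
exact: (continuousP _).1 (@continuous_shiftz i) _ oB.
Qed.

Lemma open_coord_neq (c d : Conf S -> Conf S) i : continuous c -> continuous d ->
  open [set x | c x i != d x i].
Proof.
move=> cc cd; rewrite openE => x /= cdx.
have coord_nbhs (f : Conf S -> Conf S) : continuous f ->
    nbhs x [set y | f y i = f x i].
  move=> cf; have fi : {for x, continuous ((fun y : Conf S => y i) \o f)}.
    exact: continuous_comp (cf x) (@proj_continuous int _ i (f x)).
  exact: (fi [set f x i] (@discrete_set1 (discrete_topology S) (f x i))).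
by apply: filterS (filterI (coord_nbhs c cc) (coord_nbhs d cd)) => y /= [-> ->].
Qed.

End shifts.

Definition sym_avg (R : realType) (S : FinPointed.type) (D : set (Conf S))
    (n : nat) (x : Conf S) : R :=
  (\sum_(0 <= k < (2 * n + 1)%N) \1_D (shiftz (k%:Z - n%:Z) x)) / (2 * n + 1)%:R.

Section symmetric_averages.
Variables (R : realType) (S : FinPointed.type).
Implicit Types (D : set (Conf S)) (x : Conf S).

Lemma sym_avg_01 D n x : 0 <= sym_avg R D n x <= 1.
Proof.
have /andP[s0 s1] := sum_indic_01 R D (fun k => shiftz (k%:Z - n%:Z) x) (2 * n + 1).
by rewrite divr_ge0 //= ler_pdivrMr ?mul1r // ltr0n addn1.
Qed.

Lemma bounded_sym_avg D x : bounded_fun (sym_avg R D ^~ x).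
Proof. by apply: bounded_fun_01 => n; exact: sym_avg_01. Qed.

Lemma sum_sym_le D x n :
  \sum_(0 <= k < (2 * n + 1)%N) (\1_D (shiftz (k%:Z - n%:Z) x) : R) <=
  \sum_(0 <= k < n.+1) \1_D (iter k (shiftz 1) x) +
  \sum_(0 <= k < n.+1) \1_D (iter k (shiftz (-1)) x).
Proof.
rewrite (@big_cat_nat _ _ _ n) //=; last by lia.
rewrite addrC lerD //.
  rewrite -{1}(add0n n) big_addn (_ : (2 * n + 1 - n = n.+1)%N); last by lia.
  by apply: ler_sum => k _; rewrite iter_shiftz mul1r PoszD addrK.
rewrite big_nat_recl // -[X in X <= _]add0r lerD // big_nat_rev /=.
apply: ler_sum_nat => k /andP[_ kn].
rewrite iter_shiftz shiftzD add0n.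
by have -> : (n - k.+1)%N%:Z - n%:Z = -1 + -1 * k%:Z by lia.
Qed.

Lemma sym_avg_le D n x : sym_avg R D n x <=
  (ergodic_avg R (shiftz 1) D n x + ergodic_avg R (shiftz (-1)) D n x) / 2
  + n.+1%:R^-1.
Proof.
have /andP[a0 a1] := ergodic_avg_01 R (shiftz 1) D n x.
have /andP[b0 b1] := ergodic_avg_01 R (shiftz (-1)) D n x.
set a := ergodic_avg _ _ _ _ _ in a0 a1 *; set b := ergodic_avg _ _ _ _ _ in b0 b1 *.
set N := n.+1%:R; have N1 : 1 <= N by rewrite ler1n.
have N0 : N != 0 by rewrite gt_eqF // (lt_le_trans ltr01).
have [EA EB] : \sum_(0 <= k < n.+1) \1_D (iter k (shiftz 1) x) = a * N /\
               \sum_(0 <= k < n.+1) \1_D (iter k (shiftz (-1)) x) = b * N.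
  by rewrite /a /b /ergodic_avg !divfK.
have := sum_sym_le D x n; rewrite EA EB /sym_avg => sum_le.
have -> : (2 * n + 1)%:R = 2 * N - 1 :> R by rewrite /N natrD natrM -natr1; ring.
rewrite ler_pdivrMr; last by lra.
have r1 : N^-1 <= 1 by rewrite invf_le1 // (lt_le_trans ltr01).
have rN : N^-1 * N = 1 by rewrite mulVf.
(* lra mishandles the inverse of a natural-number cast unless it is an opaque atom. *)
by clearbody a b N; lra.
Qed.

Lemma limn_sup_sym_avg_le D x : limn_sup (sym_avg R D ^~ x) <=
  (ergodic_limsup R (shiftz 1) D x + ergodic_limsup R (shiftz (-1)) D x) / 2.
Proof.
apply: limn_sup_le_near; first exact: bounded_sym_avg.
move=> e e0; have e3 : 0 < e / 3 by rewrite divr_gt0.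
near=> n; apply: (le_trans (sym_avg_le D n x)).
have : ergodic_avg R (shiftz 1) D n x <= ergodic_limsup R (shiftz 1) D x + e / 3.
  by near: n; exact: near_le_limn_sup (bounded_ergodic_avg _ _ _ _) e3.
have : ergodic_avg R (shiftz (-1)) D n x <= ergodic_limsup R (shiftz (-1)) D x + e / 3.
  by near: n; exact: near_le_limn_sup (bounded_ergodic_avg _ _ _ _) e3.
have : n.+1%:R^-1 < e / 3 by near: n; exact: (near_infty_natSinv_lt (PosNum e3)).
by move: n.+1%:R^-1 => r *; lra.
Unshelve. all: by end_near.
Qed.

Lemma sym_avgC D n x : sym_avg R D n x + sym_avg R (~` D) n x = 1.
Proof.
rewrite /sym_avg -mulrDl -big_split /= (eq_bigr (fun=> 1)); last first.
  by move=> k _; rewrite indicC /= indicE; case: (_ \in D); rewrite ?addr0 ?add0r.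
by rewrite sumr_const_nat subn0 mulfV // pnatr_eq0 addn1.
Qed.

Lemma limn_sup_sym_avgC D x :
  1 <= limn_sup (sym_avg R D ^~ x) + limn_sup (sym_avg R (~` D) ^~ x).
Proof.
apply: le_trans (le_limn_supD (bounded_sym_avg D x) (bounded_sym_avg (~` D) x)).
apply: limn_sup_ge; first by apply: bounded_funD; exact: bounded_sym_avg.
by move=> n; rewrite /= sym_avgC.
Qed.

End symmetric_averages.

Section shift_invariant_measure.
Variables (S : FinPointed.type) (R : realType) (mu : probability (BorelConf S) R).
Hypothesis mu_shift_inv : forall C : set (BorelConf S),
  measurable C -> mu (@sshift S @` C) = mu C.

Lemma image_sshift (C : set (Conf S)) : @sshift S @` C = shiftz (-1) @^-1` C.
Proof.
apply/seteqP; split => [_ [x Cx <-]|y Cy] /=; first by rewrite shiftzD addrC subrr shiftz0.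
by exists (shiftz (-1) y); rewrite // /sshift -/(shiftz 1 _) shiftzD subrr shiftz0.
Qed.

Lemma measure_preimage_shiftzN1 (A : set (BorelConf S)) : measurable A ->
  mu (shiftz (-1) @^-1` A) = mu A.
Proof. by move=> mA; rewrite -image_sshift mu_shift_inv. Qed.

Lemma measure_preimage_shiftz1 (A : set (BorelConf S)) : measurable A ->
  mu (shiftz 1 @^-1` A) = mu A.
Proof.
move=> mA; have mA1 : measurable (shiftz 1 @^-1` A : set (BorelConf S)).
  by rewrite -[_ @^-1` _]setTI; exact: measurable_shiftz.
rewrite -measure_preimage_shiftzN1 //; congr (mu _); apply/seteqP.
by split => x /=; rewrite shiftzD subrr shiftz0.
Qed.

Lemma measurable_sym_avg (D : set (BorelConf S)) n : measurable D ->
  measurable_fun setT (sym_avg R D n : BorelConf S -> R).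
Proof.
move=> mD; apply: measurable_funM; last exact: measurable_cst.
apply: measurable_sum => k; apply: measurableT_comp (measurable_shiftz _).
exact: measurable_indic.
Qed.

Lemma measurable_limn_sup_sym_avg (D : set (BorelConf S)) : measurable D ->
  measurable_fun setT (fun x : BorelConf S => limn_sup (sym_avg R D ^~ x)).
Proof.
move=> mD; apply: measurable_fun_limn_sup => [x _|x _|n].
- exact/bounded_fun_has_ubound/bounded_sym_avg.
- exact/bounded_fun_has_lbound/bounded_sym_avg.
- exact: measurable_sym_avg.
Qed.

Lemma integral_limn_sup_sym_avg_le (D : set (BorelConf S)) : measurable D ->
  (\int[mu]_x (limn_sup (sym_avg R D ^~ x))%:E <= mu D)%E.
Proof.
move=> mD; set g := fun i x => ergodic_limsup R (@shiftz S i) D x.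
have mg i : measurable_fun setT (g i : BorelConf S -> R).
  exact: (measurable_ergodic_limsup (R := R) (measurable_shiftz i) mD).
have g0 i x : 0 <= g i x by case/andP: (ergodic_limsup_01 R (shiftz i) D x).
have Ig1 : (\int[mu]_x (g 1 x)%:E <= mu D)%E.
  apply: integral_ergodic_limsup_le => //; first exact: measurable_shiftz.
  exact: measure_preimage_shiftz1.
have IgN1 : (\int[mu]_x (g (-1) x)%:E <= mu D)%E.
  apply: integral_ergodic_limsup_le => //; first exact: measurable_shiftz.
  exact: measure_preimage_shiftzN1.
apply: (@le_trans _ _ (\int[mu]_x ((2^-1)%:E * ((g 1 x)%:E + (g (-1) x)%:E)))%E).
  apply: ge0_le_integral => //.
  - by move=> x _; rewrite lee_fin; case/andP: (limn_sup_01 (sym_avg_01 R D ^~ x)).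
  - by apply/measurable_EFinP; exact: measurable_limn_sup_sym_avg.
  - by apply: emeasurable_funM => //; apply: emeasurable_funD; apply/measurable_EFinP.
  - by move=> x _; rewrite -EFinD -EFinM lee_fin mulrC; exact: limn_sup_sym_avg_le.
rewrite ge0_integralZl_EFin ?invr_ge0 //; last 2 first.
- by move=> x _; rewrite adde_ge0 // lee_fin.
- by apply: emeasurable_funD; apply/measurable_EFinP.
rewrite ge0_integralD //; [|by move=> x _; rewrite lee_fin|exact/measurable_EFinP
  |by move=> x _; rewrite lee_fin|exact/measurable_EFinP].
apply: le_trans (lee_wpmul2l _ (leeD Ig1 IgN1)) _; first by rewrite lee_fin invr_ge0.
by rewrite -[mu D]fineK ?fin_num_measure // -EFinD -EFinM lee_fin; lra.
Qed.

End shift_invariant_measure.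

Lemma dB_limn_sup_sym_avg (R : realType) (S : FinPointed.type) (c d : Conf S -> Conf S)
    (hc : forall x, c (sshift x) = sshift (c x))
    (hd : forall x, d (sshift x) = sshift (d x)) x :
  dB R (c x) (d x) = limn_sup (sym_avg R [set y | c y 0 != d y 0] ^~ x).
Proof.
rewrite /dB /sym_avg; congr limn_sup; apply: funext => n; congr (_ / _).
rewrite -sum1_card natr_sum big_mkcond /= big_mkord; apply: eq_bigr => k _.
have memE y : (y \in [set y : Conf S | c y 0 != d y 0]) = (c y 0 != d y 0).
  by apply/idP/idP => [/set_mem|/mem_set].
rewrite unfold_in /= asboolb indicE memE (shiftz_commute hc) (shiftz_commute hd).
by rewrite /shiftz add0r; case: ifP.
Qed.

Unset Implicit Arguments.
Set Strict Implicit.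
Set Printing Implicit Defensive.

Theorem mainTheorem20 (R : realType) (S : FinPointed.type) (hS : (1 < #|S|)%N)
  (mu : probability (BorelConf S) R)
  (mu_shift_inv : forall C : set (BorelConf S),
      measurable C -> mu (@sshift S @` C) = mu C)
  (c d : Conf S -> Conf S) (hc : is_CA c) (hd : is_CA d) :
  (\int[mu]_x (dB R (c x) (d x))%:E = mu [set x : BorelConf S | c x 0%R != d x 0%R])%E.
Proof.
set D := [set x : BorelConf S | c x 0 != d x 0].
have mD : measurable D := measurable_open_Conf (open_coord_neq 0 hc.1 hd.1).
have sym_ge0 A x : 0 <= limn_sup (sym_avg R A ^~ x).
  by case/andP: (limn_sup_01 (sym_avg_01 R A ^~ x)).
under eq_integral do rewrite (dB_limn_sup_sym_avg R hc.2 hd.2).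
apply: (integral_eq_measure_complement (P := mu)
  (g := fun x : BorelConf S => limn_sup (sym_avg R (~` D) ^~ x))) => //.
- exact: measurable_limn_sup_sym_avg mD.
- exact: measurable_limn_sup_sym_avg (measurableC mD).
- exact: limn_sup_sym_avgC.
- exact: integral_limn_sup_sym_avg_le mD.
- exact: integral_limn_sup_sym_avg_le (measurableC mD).
Qed.
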